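(* Let $n\geq 3$ and let $G$ be a connected graph with $|V(G)|<n$. Then $\mathrm{ldim}_f(G\square K_n)=\frac{n}{2}$.
   Context: All graphs are finite, simple and connected; $d$ is the shortest-path distance; $K_n$ is the complete graph on $n$ vertices. For an edge $uv$ of a graph $X$, $L_X(uv)=\{x\in V(X): d_X(u,x)\neq d_X(v,x)\}$. A function $f:V(X)\to[0,1]$ is a local resolving function of $X$ if $\sum_{x\in L_X(uv)}f(x)\geq 1$ for every edge $uv$; $\mathrm{ldim}_f(X)$ is the minimum of $\sum_{v}f(v)$ over all local resolving functions. The Cartesian product $G\square H$ has vertex set $V(G)\times V(H)$, with $(u_1,v_1)$ adjacent to $(u_2,v_2)$ iff ($u_1u_2\in E(G)$ and $v_1=v_2$) or ($u_1=u_2$ and $v_1v_2\in E(H)$). *)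

From HB Require Import structures.
From mathcomp Require Import all_boot all_order all_algebra.
Set Implicit Arguments. Unset Strict Implicit. Unset Printing Implicit Defensive.
Import Order.TTheory GRing.Theory Num.Theory.

Definition simple_graph (T : finType) (e : rel T) : Prop :=
  irreflexive e /\ symmetric e.

Definition connected_graph (T : finType) (e : rel T) : Prop :=
  forall x y : T, connect e x y.

Fixpoint reach (T : finType) (e : rel T) (k : nat) (x y : T) : bool :=
  match k with
  | 0 => x == y
  | k'.+1 => [exists z, e x z && reach e k' z y]
  end.

(* Shortest-path distance: least k (< |V|) such that a k-walk from x to y
   exists (in a connected graph such a k always exists). *)
Definition gdist (T : finType) (e : rel T) (x y : T) : nat :=
  find (fun k => reach e k x y) (iota 0 #|T|).

Definition Lset (T : finType) (e : rel T) (u v : T) : {set T} :=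
  [set x | gdist e u x != gdist e v x].

Definition local_resolving_fun (R : realFieldType) (T : finType) (e : rel T)
    (f : T -> R) : Prop :=
  (forall x, (0 <= f x <= 1)%R) /\
  (forall u v, e u v -> (1 <= (\sum_(x in Lset e u v) f x)%R)%R).

Definition ldimf_is (R : realFieldType) (T : finType) (e : rel T) (r : R) : Prop :=
  (exists f : T -> R, local_resolving_fun e f /\ (\sum_x f x)%R = r) /\
  (forall f : T -> R, local_resolving_fun e f -> (r <= (\sum_x f x)%R)%R).

Definition cart_prod (T1 T2 : finType) (e1 : rel T1) (e2 : rel T2) : rel (T1 * T2) :=
  fun a b => (e1 a.1 b.1 && (a.2 == b.2)) || ((a.1 == b.1) && e2 a.2 b.2).

Definition complete_graph (n : nat) : rel 'I_n := fun i j => i != j.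
Arguments complete_graph n : clear implicits.

From HB Require Import structures.
From mathcomp Require Import all_boot all_order all_algebra.
From mathcomp Require Import perm.
From mathcomp Require Import ring lra zify.
Import Order.TTheory GRing.Theory Num.Theory.
Set Implicit Arguments. Unset Strict Implicit.

(* Write X for G [] K_n and m for |V(G)|.  A layer edge (g,i)(g,j) is resolved
   exactly by the two layers G x {i,j}: a vertex (x,i) is closer to (g,i) than
   to (g,j), and a vertex in a third layer is equidistant from them since the
   automorphism of X swapping the layers i and j fixes it.  Hence the layer
   weights s_i satisfy s_i + s_j >= 1 for all i != j, which forces
   sum_i s_i >= n/2.  Conversely
   every edge of X is resolved by at least 2m vertices (a graph edge gh by the
   fibres {g,h} x K_n, of size 2n >= 2m), so the constant 1/(2m) is a local
   resolving function of total weight mn/(2m) = n/2. *)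

Section GraphDistance.
Variables (T : finType) (e : rel T).

Lemma reach_path x p : path e x p -> reach e (size p) x (last x p).
Proof.
elim: p x => [|y p IHp] x /=; first by rewrite eqxx.
by case/andP=> exy py; apply/existsP; exists y; rewrite exy IHp.
Qed.

Lemma reach_connect k x y : reach e k x y -> connect e x y.
Proof.
elim: k x => [|k IHk] x /=; first by move/eqP->.
by case/existsP=> z /andP[exz /IHk]; apply: connect_trans (connect1 exz).
Qed.

Lemma gdist_le k x y : (k < #|T|)%N -> reach e k x y -> (gdist e x y <= k)%N.
Proof.
move=> ltkT rk; rewrite leqNgt; apply/negP=> /(before_find 0).
by rewrite nth_iota // add0n rk.
Qed.

Lemma reach_gdist x y : (gdist e x y < #|T|)%N -> reach e (gdist e x y) x y.
Proof.
move=> lt_dT.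
have hasr : has (fun k => reach e k x y) (iota 0 #|T|) by rewrite has_find size_iota.
by have := nth_find 0 hasr; rewrite nth_iota // add0n.
Qed.

Lemma gdist_lt_card x y : connect e x y -> (gdist e x y < #|T|)%N.
Proof.
case/connectP=> p /shortenP[q path_q uniq_q _] ->.
have ltqT : (size q < #|T|)%N.
  by have := max_card (mem (x :: q)); rewrite (card_uniqP uniq_q).
exact: leq_ltn_trans (gdist_le ltqT (reach_path path_q)) ltqT.
Qed.

Lemma gdist_eq0 x y : (gdist e x y == 0%N) = (x == y).
Proof.
have T0 : (0 < #|T|)%N by apply/card_gt0P; exists x.
apply/eqP/eqP=> [d0 | ->].
  by have := @reach_gdist x y; rewrite d0 => /(_ T0) /eqP.
by apply/eqP; rewrite -leqn0 gdist_le //= eqxx.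
Qed.

Lemma gdist_eq1 x y : x != y -> (gdist e x y == 1%N) = e x y.
Proof.
move=> neq_xy; have T1 : (1 < #|T|)%N.
  by have := max_card (mem [set x; y]); rewrite cards2 neq_xy.
apply/eqP/idP=> [d1 | exy].
  have := @reach_gdist x y; rewrite d1 => /(_ T1) /existsP[z /andP[exz /eqP <-]].
  exact: exz.
have : (gdist e x y <= 1)%N by apply: gdist_le => //; apply/existsP; exists y; rewrite exy /=.
by rewrite leq_eqVlt ltnS leqn0 gdist_eq0 (negbTE neq_xy) orbF => /eqP.
Qed.

Lemma gdist_perm (s : {perm T}) :
  {mono s : x y / e x y} -> {mono s : x y / gdist e x y}.
Proof.
move=> se; suff sr k : {mono s : x y / reach e k x y}.
  by move=> x y; apply: eq_find => k; apply: sr.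
elim: k => [|k IHk] x y /=; first by rewrite (inj_eq perm_inj).
apply/existsP/existsP=> -[z /andP[exz rzy]].
  by exists ((s^-1)%g z); rewrite -se -IHk permKV exz rzy.
by exists (s z); rewrite se IHk exz rzy.
Qed.

Lemma LsetC u v : Lset e u v = Lset e v u.
Proof. by apply/setP=> w; rewrite !inE eq_sym. Qed.

End GraphDistance.

Section CartesianProductWithClique.
Variables (T : finType) (e : rel T) (n : nat).
Local Notation X := (cart_prod e (complete_graph n)).

Lemma cart_prod_clique_edge g i j : i != j -> X (g, i) (g, j).
Proof. by move=> neq_ij; rewrite /cart_prod /complete_graph /= eqxx neq_ij orbT. Qed.

Lemma reach_cart_layer k g x i : reach e k g x -> reach X k (g, i) (x, i).
Proof.
elim: k g => [|k IHk] g /=; first by move/eqP->.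
case/existsP=> z /andP[egz rzx]; apply/existsP; exists (z, i).
by rewrite IHk // /cart_prod /= egz eqxx.
Qed.

Lemma cart_prod_connected : connected_graph e -> connected_graph X.
Proof.
move=> conn_e [g i] [x j]; apply: (@connect_trans _ _ (x, i)).
  by case/connectP: (conn_e g x) => p /reach_path/(reach_cart_layer i)/reach_connect + ->.
by case: (eqVneq i j) => [-> | /(cart_prod_clique_edge x)/connect1].
Qed.

(* Projecting a walk onto a fixed layer drops its clique steps, and at least one
   of them is needed to change layers. *)
Lemma reach_cart_project k u w c : reach X k u w ->
  exists2 k', (k' + (u.2 != w.2) <= k)%N & reach X k' (u.1, c) (w.1, c).
Proof.
elim: k u => [|k IHk] u /=.
  by move/eqP->; exists 0%N; rewrite /= eqxx.
case/existsP=> z /andP[+ /IHk[k' le_k' rzw]].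
case/orP=> /andP[ez /eqP eq2].
  exists k'.+1; first by rewrite eq2 addSn.
  apply/existsP; exists (z.1, c); apply/andP; split; last exact: rzw.
  by rewrite /cart_prod /= ez eqxx.
exists k'; last by rewrite (eqP ez).
by move: le_k'; case: (u.2 != w.2); case: (z.2 != w.2) => /=; lia.
Qed.

Definition relabel_layers (s : {perm 'I_n}) (w : T * 'I_n) := (w.1, s w.2).

Lemma relabel_layers_inj s : injective (relabel_layers s).
Proof. by move=> [x k] [y l] [-> /perm_inj ->]. Qed.

Lemma gdist_cart_relabel (s : {perm 'I_n}) g x i k :
  gdist X (g, s i) (x, s k) = gdist X (g, i) (x, k).
Proof.
pose r := perm (@relabel_layers_inj s).
have mono_r : {mono r : u w / X u w}.
  by move=> [? ?] [? ?]; rewrite !permE /cart_prod /complete_graph /= (inj_eq perm_inj).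
by have := gdist_perm mono_r (g, i) (x, k); rewrite !permE.
Qed.

Hypothesis simple_e : simple_graph e.

Lemma Lset_cart_graph_edge g h i : e g h ->
  setX [set g; h] [set: 'I_n] \subset Lset X (g, i) (h, i).
Proof.
have [irr_e sym_e] := simple_e.
suff Lg x y : e x y -> forall c, (x, c) \in Lset X (x, i) (y, i).
  move=> egh; apply/subsetP=> -[x c]; rewrite in_setX in_set2 in_setT andbT.
  by case/orP=> /eqP->; [apply: Lg | rewrite LsetC; apply: Lg; rewrite sym_e].
move=> exy c; have neq_xy : x != y by apply: contraTneq exy => ->; rewrite irr_e.
rewrite inE; case: (eqVneq c i) => [-> | neq_ci].
  have /eqP-> : gdist X (x, i) (x, i) == 0%N by rewrite gdist_eq0.
  by rewrite eq_sym gdist_eq0 xpair_eqE eq_sym (negbTE neq_xy).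
have /eqP-> : gdist X (x, i) (x, c) == 1%N.
  by rewrite gdist_eq1 ?cart_prod_clique_edge 1?eq_sym // xpair_eqE eqxx.
rewrite eq_sym gdist_eq1; last by rewrite xpair_eqE eq_sym (negbTE neq_xy).
by rewrite /cart_prod /complete_graph /= eq_sym (negbTE neq_ci) andbF eq_sym (negbTE neq_xy).
Qed.

Hypothesis conn_e : connected_graph e.

Lemma gdist_cart_other_layer g x i j : i != j ->
  (gdist X (g, i) (x, i) < gdist X (g, j) (x, i))%N.
Proof.
move=> neq_ij; have lt_dV := gdist_lt_card (cart_prod_connected conn_e (g, j) (x, i)).
have [k le_k rk] := reach_cart_project i (reach_gdist lt_dV).
rewrite /= eq_sym neq_ij addn1 in le_k.
exact: leq_ltn_trans (gdist_le (ltn_trans le_k lt_dV) rk) le_k.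
Qed.

Lemma Lset_cart_clique_edge g i j : i != j ->
  Lset X (g, i) (g, j) = setX [set: T] [set i; j].
Proof.
move=> neq_ij; apply/setP=> -[x k]; rewrite in_setX in_setT in_set2 /=.
case: (eqVneq k i) => [-> | neq_ki].
  by rewrite inE ltn_eqF ?gdist_cart_other_layer.
case: (eqVneq k j) => [-> | neq_kj].
  by rewrite LsetC inE ltn_eqF ?gdist_cart_other_layer // eq_sym.
by rewrite inE -(gdist_cart_relabel (tperm i j)) tpermL tpermD ?eqxx // eq_sym.
Qed.

Lemma card_Lset_cart u v : (#|T| <= n)%N -> X u v -> (#|T|.*2 <= #|Lset X u v|)%N.
Proof.
move: u v => [g i] [h j] le_Tn; rewrite {1}/cart_prod /complete_graph /=.
case/orP=> [/andP[egh /eqP <-] | /andP[/eqP <- neq_ij]].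
  have neq_gh : g != h by apply: contraTneq egh => ->; case: simple_e => ->.
  apply: leq_trans (subset_leq_card (Lset_cart_graph_edge i egh)).
  by rewrite cardsX cards2 neq_gh cardsT card_ord -mul2n leq_mul2l.
by rewrite Lset_cart_clique_edge // cardsX cards2 neq_ij cardsT muln2.
Qed.

End CartesianProductWithClique.

Local Open Scope ring_scope.

(* Summing [1 <= s i + s j] over the ordered pairs [i != j] gives
   [n (n - 1) <= 2 (n - 1) \sum_i s i]. *)
Lemma sum_ge_half_of_pairwise_ge1 (R : realFieldType) n (s : 'I_n -> R) :
  (1 < n)%N -> (forall i j, i != j -> 1 <= s i + s j) -> n%:R / 2 <= \sum_i s i.
Proof.
move=> lt1n s_pair; set S := \sum_i s i.
have sum1 : \sum_(j : 'I_n) (1 : R) = n%:R by rewrite sumr_const card_ord.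
have row i : n%:R - 1 <= (n%:R - 2) * s i + S.
  have le_off : \sum_(j | j != i) (1 : R) <= \sum_(j | j != i) (s i + s j).
    by apply: ler_sum => j neq_ji; rewrite s_pair // eq_sym.
  have split1 : n%:R = 1 + \sum_(j | j != i) 1 :> R by rewrite -sum1 (bigD1 i).
  have split2 : \sum_j (s i + s j) = s i + s i + \sum_(j | j != i) (s i + s j).
    by rewrite (bigD1 i).
  rewrite big_split /= sumr_const card_ord -mulr_natr -/S in split2.
  lra.
have : \sum_(i : 'I_n) (n%:R - 1) <= \sum_i ((n%:R - 2) * s i + S).
  by apply: ler_sum => i _; exact: row.
rewrite sumr_const card_ord big_split /= -mulr_sumr -/S sumr_const card_ord.
rewrite -[(n%:R - 1) *+ n]mulr_natl -[S *+ n]mulr_natl => le_rows.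
have lt1n' : 1 < n%:R :> R by rewrite ltr1n.
by rewrite ler_pdivrMr //; nra.
Qed.

Section LocalResolvingCartesianProduct.
Variables (R : realFieldType) (T : finType) (e : rel T) (n : nat).
Hypotheses (simple_e : simple_graph e) (conn_e : connected_graph e).
Local Notation X := (cart_prod e (complete_graph n)).

Lemma local_resolving_cart_sum_ge (f : T * 'I_n -> R) :
  (0 < #|T|)%N -> (1 < n)%N -> local_resolving_fun X f -> n%:R / 2 <= \sum_w f w.
Proof.
case/card_gt0P=> g _ lt1n [_ f_res].
have -> : \sum_w f w = \sum_x \sum_k f (x, k) by rewrite pair_bigA; apply: eq_bigr => -[].
rewrite exchange_big /=.
apply: sum_ge_half_of_pairwise_ge1 => // i j neq_ij.
apply: le_trans (f_res _ _ (cart_prod_clique_edge e g neq_ij)) _.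
rewrite Lset_cart_clique_edge // -big_split /=.
have -> : \sum_(w in setX [set: T] [set i; j]) f w = \sum_x \sum_(k in [set i; j]) f (x, k).
  by rewrite pair_big_dep; apply: eq_big => -[x k] //=; rewrite in_setX in_setT.
by apply: ler_sum => x _; rewrite big_setU1 ?big_set1 // inE.
Qed.

Lemma local_resolving_cart_const : (0 < #|T|)%N -> (#|T| <= n)%N ->
  local_resolving_fun X (fun _ => (#|T|.*2)%:R^-1 : R).
Proof.
move=> T0 le_Tn; have T2_gt0 : 0 < (#|T|.*2)%:R :> R by rewrite ltr0n double_gt0.
split=> [_ | u v /(card_Lset_cart simple_e conn_e le_Tn) le_TL].
  by rewrite invr_ge0 ltW //= invf_le1 // ler1n double_gt0.
rewrite sumr_const -[_ *+ #|_|]mulr_natr.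
apply: le_trans (_ : (#|T|.*2)%:R^-1 * (#|T|.*2)%:R <= _); first by rewrite mulVf ?gt_eqF.
by rewrite ler_wpM2l ?ler_nat // invr_ge0 ltW.
Qed.

End LocalResolvingCartesianProduct.

Theorem theorem3p13 (R : realFieldType) (T : finType) (e : rel T) (n : nat) :
  (3 <= n)%N -> simple_graph e -> connected_graph e ->
  (0 < #|T|)%N -> (#|T| < n)%N ->
  ldimf_is (cart_prod e (complete_graph n)) ((n%:R : R) / 2%:R)%R.
Proof.
move=> le3n simple_e conn_e T0 ltTn; split; last first.
  by move=> f; apply: local_resolving_cart_sum_ge => //; apply: leq_trans le3n.
exists (fun _ => (#|T|.*2)%:R^-1); split.
  exact: local_resolving_cart_const (ltnW ltTn).
rewrite sumr_const card_prod card_ord -[_ *+ (_ * _)]mulr_natr -muln2 !natrM.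
by field; rewrite pnatr_eq0 -lt0n.
Qed.
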